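(* Let $S=\langle P,\varphi\rangle$ be a SUT model, $t$ a strength and $N\ge1$ an integer. The optimal cost of the Partial MaxSAT instance $TPMSat_{CX}^{N,t,S}$ (defined in the context) is $|\mathcal T_a|-T(N;t,S)$.
   Context: A SUT model is $S=\langle P,\varphi\rangle$, where $P$ is a finite set of parameters, each $p\in P$ having a finite nonempty domain $d(p)$, and $\varphi$ is a propositional formula whose atoms have the form $(p=v)$ with $p\in P$, $v\in d(p)$. A test case is a full assignment $A$ giving each $p$ a value in $d(p)$ such that $\varphi$ is true when each atom $(p=v)$ is read as true iff $A(p)=v$; it is assumed that at least one test case exists. Fix a strength $t$ with $1\le t\le|P|$. A $t$-tuple is an assignment of values to exactly $t$ distinct parameters, viewed as a set of pairs $(p,v)$; a test case covers $\tau$ if it assigns $v$ to $p$ for every $(p,v)\in\tau$. A $t$-tuple is allowed if some test case covers it; $\mathcal T_a$ is the set of allowed $t$-tuples. The Tuple Number $T(N;t,S)$ is the maximum number of $t$-tuples covered (each by at least one member) by a list of $N$ test cases. $[N]=\{1,\dots,N\}$. A Partial MaxSAT instance consists of hard constraints and soft clauses $(c,w)$ with positive integer weights; its optimal cost is the minimum, over truth assignments satisfying all hard constraints, of the total weight of falsified soft clauses ($\infty$ if the hard constraints are unsatisfiable). Variables: $x_{i,p,v}$ ($i\in[N]$, $p\in P$, $v\in d(p)$), $c^i_\tau$ and $c_\tau$ ($i\in[N]$, $\tau\in\mathcal T_a$). Hard constraints of $TPMSat_{CX}^{N,t,S}$: (X) for every $i\in[N]$, $p\in P$: exactly one of $\{x_{i,p,v}:v\in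 d(p)\}$ is true; (SUTX) for every $i\in[N]$: the formula obtained from $\varphi$ by replacing each atom $(p=v)$ with $x_{i,p,v}$; (CX) for every $i\in[N]$, $\tau\in\mathcal T_a$, $(p,v)\in\tau$: $c^i_\tau\rightarrow x_{i,p,v}$; (RC) for every $\tau\in\mathcal T_a$: $c_\tau\leftrightarrow\bigvee_{i\in[N]}c^i_\tau$. Soft clauses (SoftC): $(c_\tau,1)$ for every $\tau\in\mathcal T_a$. *)

From HB Require Import structures.
From mathcomp Require Import all_boot.

Set Implicit Arguments.
Unset Strict Implicit.
Unset Printing Implicit Defensive.

Inductive form (A : Type) : Type :=
  | FAtom of A
  | FTop
  | FBot
  | FNeg of form A
  | FAnd of form A & form A
  | FOr of form A & form A
  | FImp of form A & form A
  | FIff of form A & form A.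
Arguments FTop {A}.
Arguments FBot {A}.

Fixpoint feval (A : Type) (s : A -> bool) (f : form A) : bool :=
  match f with
  | FAtom a => s a
  | FTop => true
  | FBot => false
  | FNeg g => ~~ feval s g
  | FAnd g h => feval s g && feval s h
  | FOr g h => feval s g || feval s h
  | FImp g h => feval s g ==> feval s h
  | FIff g h => feval s g == feval s h
  end.

Fixpoint fmap (A B : Type) (g : A -> B) (f : form A) : form B :=
  match f with
  | FAtom a => FAtom (g a)
  | FTop => FTop
  | FBot => FBot
  | FNeg h => FNeg (fmap g h)
  | FAnd h k => FAnd (fmap g h) (fmap g k)
  | FOr h k => FOr (fmap g h) (fmap g k)
  | FImp h k => FImp (fmap g h) (fmap g k)
  | FIff h k => FIff (fmap g h) (fmap g k)
  end.

Fixpoint fatoms (A : Type) (f : form A) : seq A :=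
  match f with
  | FAtom a => [:: a]
  | FTop | FBot => [::]
  | FNeg h => fatoms h
  | FAnd h k | FOr h k | FImp h k | FIff h k => fatoms h ++ fatoms k
  end.

Definition big_or (A : Type) (s : seq (form A)) : form A := foldr (@FOr A) FBot s.
Definition big_and (A : Type) (s : seq (form A)) : form A := foldr (@FAnd A) FTop s.

Definition exactly_one (A : eqType) (s : seq A) : form A :=
  FAnd (big_or [seq FAtom x | x <- s])
       (big_and [seq FNeg (FAnd (FAtom xy.1) (FAtom xy.2))
                | xy <- [seq (x, y) | x <- s, y <- s] & xy.1 != xy.2]).

(* hard constraints: formulas; soft clauses: (clause, positive weight) *)
Record pmaxsat (X : finType) := PMaxSat {
  hard : seq (form X);
  soft : seq (form X * nat)
}.

Section MaxSAT.
Variable X : finType.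
Implicit Type I : pmaxsat X.

Definition satisfies_hard I (sigma : {ffun X -> bool}) : bool :=
  all (feval sigma) (hard I).

Definition cost I (sigma : {ffun X -> bool}) : nat :=
  \sum_(c <- soft I | ~~ feval sigma c.1) c.2.

Definition feasible I := [set sigma : {ffun X -> bool} | satisfies_hard I sigma].

(* optimal cost; None stands for infinity (hard constraints unsatisfiable) *)
Definition opt_cost I : option nat :=
  match [pick sigma in feasible I] with
  | None => None
  | Some s0 => Some (cost I [arg min_(sigma < s0 in feasible I) cost I sigma])
  end.
End MaxSAT.

(* Parameters P (finite), a common finite value type V, domains d p : {set V},
   constraint phi : form (P * V), atom (p, v) read as "p = v". *)
Section SUT.
Variables (P V : finType) (d : P -> {set V}) (phi : form (P * V)).

Definition is_test (A : {ffun P -> V}) : bool :=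
  [forall p, A p \in d p] && feval (fun pv : P * V => A pv.1 == pv.2) phi.

(* a t-tuple: assignment of values (from the domains) to exactly t distinct
   parameters, viewed as a set of pairs (p, v) *)
Definition is_ttuple (t : nat) (tau : {set P * V}) : bool :=
  [&& #|tau| == t,
      [forall pv in tau, pv.2 \in d pv.1] &
      [forall pv in tau, forall qw in tau, (pv.1 == qw.1) ==> (pv == qw)]].

Definition covers (A : {ffun P -> V}) (tau : {set P * V}) : bool :=
  [forall pv in tau, A pv.1 == pv.2].

Definition allowed (t : nat) (tau : {set P * V}) : bool :=
  is_ttuple t tau && [exists A, is_test A && covers A tau].

Definition Ta (t : nat) : {set {set P * V}} := [set tau | allowed t tau].

Definition ncovered (N t : nat) (L : {ffun 'I_N -> {ffun P -> V}}) : nat :=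
  #|[set tau | is_ttuple t tau && [exists i, covers (L i) tau]]|.

Definition tuple_number (N t : nat) : nat :=
  \max_(L : {ffun 'I_N -> {ffun P -> V}} | [forall i, is_test (L i)]) ncovered t L.

Definition tvar (N : nat) : finType :=
  ((('I_N * P * V) + ('I_N * {set P * V})) + {set P * V})%type.

Definition xv N (i : 'I_N) (p : P) (v : V) : tvar N := inl (inl (i, p, v)).
Definition cix N (i : 'I_N) (tau : {set P * V}) : tvar N := inl (inr (i, tau)).
Definition cv N (tau : {set P * V}) : tvar N := inr tau.

Definition hard_X (N : nat) : seq (form (tvar N)) :=
  [seq exactly_one [seq xv i p v | v <- enum (d p)] | i <- enum 'I_N, p <- enum P].

Definition hard_SUTX (N : nat) : seq (form (tvar N)) :=
  [seq fmap (fun pv : P * V => xv i pv.1 pv.2) phi | i <- enum 'I_N].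

Definition hard_CX (N t : nat) : seq (form (tvar N)) :=
  flatten [seq [seq FImp (FAtom (cix i tau)) (FAtom (xv i pv.1 pv.2))
               | tau <- enum (Ta t), pv <- enum tau] | i <- enum 'I_N].

Definition hard_RC (N t : nat) : seq (form (tvar N)) :=
  [seq FIff (FAtom (cv N tau)) (big_or [seq FAtom (cix i tau) | i <- enum 'I_N])
  | tau <- enum (Ta t)].

Definition soft_C (N t : nat) : seq (form (tvar N) * nat) :=
  [seq (FAtom (cv N tau), 1) | tau <- enum (Ta t)].

Definition TPMSat_CX (N t : nat) : pmaxsat (tvar N) :=
  PMaxSat (hard_X N ++ hard_SUTX N ++ hard_CX N t ++ hard_RC N t) (soft_C N t).
End SUT.

From HB Require Import structures.
From mathcomp Require Import all_boot.

(** A feasible assignment of the encoding decodes, through its x-variables, into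
    a list of N test cases (constraints X and SUTX), and by CX and RC every
    allowed tuple whose variable c_tau is true is covered by one of these tests;
    hence at least |T_a| - T(N;t,S) soft clauses are falsified.  Conversely,
    encoding a list of N tests that covers T(N;t,S) tuples, and setting c_tau
    exactly for the tuples it covers (all of them allowed), is feasible and
    attains this cost. *)

Set Implicit Arguments.
Unset Strict Implicit.
Unset Printing Implicit Defensive.

Lemma all_flatten (T : Type) (a : pred T) (ss : seq (seq T)) :
  all a (flatten ss) = all (all a) ss.
Proof. by elim: ss => //= s ss <-; rewrite all_cat. Qed.

Lemma eq_feval (A : eqType) (s1 s2 : A -> bool) (f : form A) :
  {in fatoms f, s1 =1 s2} -> feval s1 f = feval s2 f.
Proof.
elim: f => [a|||g IH|g IHg h IHh|g IHg h IHh|g IHg h IHh|g IHg h IHh] //= eq_s;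
  first (by rewrite eq_s ?mem_head); first by rewrite IH.
all: by rewrite IHg ?IHh // => a a_in; apply: eq_s; rewrite mem_cat a_in ?orbT.
Qed.

Lemma feval_fmap (A B : Type) (g : A -> B) (s : B -> bool) (f : form A) :
  feval s (fmap g f) = feval (s \o g) f.
Proof. by elim: f => //= [h ->|h -> k ->|h -> k ->|h -> k ->|h -> k ->]. Qed.

Lemma feval_big_or (A : Type) (s : A -> bool) (l : seq (form A)) :
  feval s (big_or l) = has (feval s) l.
Proof. by elim: l => //= f l <-. Qed.

Lemma feval_big_and (A : Type) (s : A -> bool) (l : seq (form A)) :
  feval s (big_and l) = all (feval s) l.
Proof. by elim: l => //= f l <-. Qed.

Lemma exactly_oneP (A : eqType) (s : A -> bool) (l : seq A) :
  reflect (exists2 x, x \in l & {in l, forall y, s y = (y == x)}) (feval s (exactly_one l)).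
Proof.
rewrite /exactly_one /= feval_big_or feval_big_and has_map all_map.
apply: (iffP idP) => [/andP[/hasP[x xl /= sx] /allP no_two] | [x xl s_x]].
  exists x => // y yl; apply/idP/eqP=> [sy|-> //]; apply/eqP/negPn/negP=> yx.
  have /no_two/= : (y, x) \in [seq xy <- [seq (a, b) | a <- l, b <- l] | xy.1 != xy.2].
    by rewrite mem_filter yx allpairs_f.
  by rewrite sy sx.
apply/andP; split; first by apply/hasP; exists x; rewrite //= s_x.
apply/allP=> -[a b]; rewrite mem_filter => /andP[/= ab /allpairsP[[a0 b0] [/= al bl E]]].
move: ab; case: E => -> -> ab.
by rewrite !s_x //; apply: contra ab => /andP[/eqP-> /eqP->].
Qed.

Lemma opt_cost_Some (X : finType) (I : pmaxsat X) (c : nat) :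
  (exists2 sigma, satisfies_hard I sigma & cost I sigma = c) ->
  (forall sigma, satisfies_hard I sigma -> c <= cost I sigma) ->
  opt_cost I = Some c.
Proof.
move=> [s1 s1_hard <-] c_le; rewrite /opt_cost.
case: pickP => [s0 s0_feasible|/(_ s1)]; last by rewrite inE s1_hard.
case: arg_minnP => // s; rewrite inE => s_hard s_min; congr Some.
by apply/eqP; rewrite eqn_leq c_le // s_min ?inE.
Qed.

Section TPMSatCX.
Variables (P V : finType) (d : P -> {set V}) (phi : form (P * V)) (t N : nat).

Local Notation test_list := {ffun 'I_N -> {ffun P -> V}}.
Local Notation assignment := {ffun tvar P V N -> bool}.
Local Notation TPMSat := (TPMSat_CX d phi N t).

Lemma leq_ncovered_tuple_number (L : test_list) :
  [forall i, is_test d phi (L i)] -> ncovered d t L <= tuple_number d phi N t.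
Proof. exact: (leq_bigmax_cond (F := ncovered d t)). Qed.

Lemma tuple_number_attained (A : {ffun P -> V}) : is_test d phi A ->
  exists2 L : test_list,
    [forall i, is_test d phi (L i)] & ncovered d t L = tuple_number d phi N t.
Proof.
move=> A_test; have LA_tests : [forall i, is_test d phi (([ffun=> A] : test_list) i)].
  by apply/forallP=> i; rewrite ffunE.
rewrite /tuple_number (bigmax_eq_arg _ LA_tests).
by case: arg_maxnP => // L L_tests _; exists L.
Qed.

Lemma hard_XP (sigma : assignment) :
  reflect (forall i p, feval sigma (exactly_one [seq xv i p v | v <- enum (d p)]))
          (all (feval sigma) (hard_X d N)).
Proof.
apply: (iffP all_allpairsP) => [s_X i p | s_X i p _ _]; last exact: s_X.
by apply: s_X; rewrite mem_enum.
Qed.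

Lemma hard_SUTXP (sigma : assignment) :
  reflect (forall i, feval (fun pv : P * V => sigma (xv i pv.1 pv.2)) phi)
          (all (feval sigma) (hard_SUTX phi N)).
Proof.
rewrite all_map; apply: (iffP allP) => [s_S i | s_S i _] /=.
  by move: (s_S i); rewrite mem_enum /= feval_fmap; apply.
by rewrite feval_fmap; apply: s_S.
Qed.

Lemma hard_CXP (sigma : assignment) :
  reflect (forall i, {in Ta d phi t, forall tau, sigma (cix i tau) ->
                       {in tau, forall pv, sigma (xv i pv.1 pv.2)}})
          (all (feval sigma) (hard_CX d phi N t)).
Proof.
rewrite all_flatten all_map.
apply: (iffP allP) => [s_CX i tau tau_a c_i pv pv_tau | s_CX i _].
  move/(_ i): s_CX; rewrite mem_enum => /(_ isT)/all_allpairsP/(_ tau pv).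
  by rewrite !mem_enum /= c_i; apply.
apply/all_allpairsP => tau pv; rewrite !mem_enum => tau_a pv_tau /=.
by apply/implyP => c_i; apply: s_CX c_i pv pv_tau.
Qed.

Lemma hard_RCP (sigma : assignment) :
  reflect {in Ta d phi t, forall tau, sigma (cv N tau) = [exists i, sigma (cix i tau)]}
          (all (feval sigma) (hard_RC d phi N t)).
Proof.
have has_cix tau : has (feval sigma) [seq FAtom (cix i tau) | i <- enum 'I_N] =
                   [exists i, sigma (cix i tau)].
  by rewrite has_map; apply/hasP/existsP => [[i]|[i]]; exists i; rewrite ?mem_enum.
rewrite all_map; apply: (iffP allP) => s_RC tau.
  by rewrite -mem_enum => /s_RC; rewrite /= feval_big_or has_cix => /eqP.
by rewrite mem_enum => tau_a; rewrite /= feval_big_or has_cix s_RC.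
Qed.

Lemma satisfies_hard_TPMSatP (sigma : assignment) :
  reflect [/\ forall i p, feval sigma (exactly_one [seq xv i p v | v <- enum (d p)]),
              forall i, feval (fun pv : P * V => sigma (xv i pv.1 pv.2)) phi,
              forall i, {in Ta d phi t, forall tau, sigma (cix i tau) ->
                          {in tau, forall pv, sigma (xv i pv.1 pv.2)}} &
              {in Ta d phi t, forall tau, sigma (cv N tau) = [exists i, sigma (cix i tau)]}]
          (satisfies_hard TPMSat sigma).
Proof.
rewrite /satisfies_hard /= !all_cat.
apply: (iffP and4P) => -[? ? ? ?]; split;
  by [apply/hard_XP | apply/hard_SUTXP | apply/hard_CXP | apply/hard_RCP].
Qed.

Lemma cost_TPMSat (sigma : assignment) :
  cost TPMSat sigma = #|Ta d phi t| - #|Ta d phi t :&: [set tau | sigma (cv N tau)]|.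
Proof.
rewrite -cardsD /cost big_map big_enum_cond -sum1dep_card /=.
by apply: eq_bigl => tau; rewrite !inE andbC.
Qed.

Lemma xv_inj (i : 'I_N) (p : P) : injective (@xv P V N i p).
Proof. by move=> v w [->]. Qed.

Lemma exactly_one_xvP (sigma : assignment) i p :
  reflect (exists2 w, w \in d p & {in d p, forall v, sigma (xv i p v) = (w == v)})
          (feval sigma (exactly_one [seq xv i p v | v <- enum (d p)])).
Proof.
apply: (iffP (exactly_oneP _ _)) => [[_ /mapP[w w_d ->] s_w] | [w w_d s_w]].
  exists w => [|v v_d]; first by rewrite -mem_enum.
  by rewrite s_w ?map_f ?mem_enum // (inj_eq (@xv_inj i p)) eq_sym.
exists (xv i p w); first by rewrite map_f ?mem_enum.
move=> _ /mapP[v v_d ->]; rewrite mem_enum in v_d.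
by rewrite s_w // (inj_eq (@xv_inj i p)) eq_sym.
Qed.

Section Decoding.
(* [A0] is only a filler: it is never read when sigma satisfies the X constraints. *)
Variable A0 : {ffun P -> V}.
Hypothesis phi_wf : forall pv : P * V, pv \in fatoms phi -> pv.2 \in d pv.1.

Definition decode (sigma : assignment) : test_list :=
  [ffun i => [ffun p => odflt (A0 p) [pick v in d p | sigma (xv i p v)]]].

Lemma decodeP (sigma : assignment) :
  (forall i p, feval sigma (exactly_one [seq xv i p v | v <- enum (d p)])) ->
  forall i p, decode sigma i p \in d p /\
              {in d p, forall v, sigma (xv i p v) = (decode sigma i p == v)}.
Proof.
move=> s_X i p; have [w w_d s_w] := exactly_one_xvP sigma i p (s_X i p).
suff -> : decode sigma i p = w by [].
rewrite !ffunE; case: pickP => [v /andP[v_d] | /(_ w)]; last by rewrite w_d s_w ?eqxx.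
by rewrite s_w // => /eqP.
Qed.

Lemma decode_tests (sigma : assignment) :
  satisfies_hard TPMSat sigma -> [forall i, is_test d phi (decode sigma i)].
Proof.
case/satisfies_hard_TPMSatP => s_X s_S _ _; apply/forallP => i.
have dec p := decodeP s_X i p.
apply/andP; split; first by apply/forallP => p; case: (dec p).
rewrite -(eq_feval (s1 := fun pv => sigma (xv i pv.1 pv.2))) //.
by move=> pv /phi_wf pv_d; case: (dec pv.1) => _ ->.
Qed.

Lemma tuple_number_lower_bound (sigma : assignment) :
  satisfies_hard TPMSat sigma -> #|Ta d phi t| - tuple_number d phi N t <= cost TPMSat sigma.
Proof.
move=> s_hard; rewrite cost_TPMSat leq_sub2l //.
apply: leq_trans (leq_ncovered_tuple_number (decode_tests s_hard)).
case/satisfies_hard_TPMSatP: s_hard => s_X _ s_CX s_RC.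
apply/subset_leq_card/subsetP => tau; rewrite inE => /andP[tau_a].
rewrite inE s_RC // => /existsP[i c_i].
move: (tau_a); rewrite inE => /andP[tau_t _].
rewrite inE tau_t; apply/existsP; exists i; apply/forall_inP => pv pv_tau.
have pv_d : pv.2 \in d pv.1 by case/and3P: tau_t => _ /forall_inP/(_ pv pv_tau).
by case: (decodeP s_X i pv.1) => _ <-; first exact: s_CX tau_a c_i pv pv_tau.
Qed.

End Decoding.

Definition encode (L : test_list) : assignment := [ffun x =>
  match x with
  | inl (inl (i, p, v)) => L i p == v
  | inl (inr (i, tau)) => covers (L i) tau
  | inr tau => [exists i, covers (L i) tau]
  end].

Lemma encode_hard (L : test_list) :
  [forall i, is_test d phi (L i)] -> satisfies_hard TPMSat (encode L).
Proof.
move=> /forallP L_tests; apply/satisfies_hard_TPMSatP; split.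
- move=> i p; apply/exactly_one_xvP; exists (L i p) => [|v _]; last by rewrite ffunE.
  by case/andP: (L_tests i) => /forallP.
- move=> i; case/andP: (L_tests i) => _.
  rewrite -(eq_feval (s1 := fun pv : P * V => encode L (xv i pv.1 pv.2))) // => pv _.
  by rewrite ffunE.
- by move=> i tau _; rewrite ffunE => /forall_inP L_tau pv /L_tau; rewrite ffunE.
- by move=> tau _; rewrite ffunE; apply: eq_existsb => i; rewrite ffunE.
Qed.

Lemma cost_encode (L : test_list) :
  [forall i, is_test d phi (L i)] ->
  cost TPMSat (encode L) = #|Ta d phi t| - ncovered d t L.
Proof.
move=> /forallP L_tests; rewrite cost_TPMSat /ncovered; congr (_ - _).
apply: eq_card => tau; rewrite !inE ffunE /allowed -andbA.
case: (is_ttuple d t tau) => //=.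
apply/andP/idP => [[_ //] | /[dup] L_tau /existsP[i L_i_tau]].
by split=> //; apply/existsP; exists (L i); rewrite L_tests.
Qed.

End TPMSatCX.

Theorem proposition9 (P V : finType) (d : P -> {set V}) (phi : form (P * V))
    (t N : nat)
    (d_nonempty : forall p : P, d p != set0)
    (phi_wf : forall pv : P * V, pv \in fatoms phi -> pv.2 \in d pv.1)
    (test_exists : exists A : {ffun P -> V}, is_test d phi A)
    (t_ge1 : 1 <= t) (t_le : t <= #|P|)
    (N_ge1 : 1 <= N) :
  opt_cost (TPMSat_CX d phi N t) =
    Some (#|Ta d phi t| - tuple_number d phi N t).
Proof.
have [A A_test] := test_exists.
have [L L_tests L_opt] := tuple_number_attained t N A_test.
apply: opt_cost_Some; last exact: tuple_number_lower_bound A phi_wf.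
by exists (encode L); rewrite ?encode_hard ?cost_encode ?L_opt.
Qed.
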